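(* (a) If for some $i_0 \in \{1, \ldots, n\}$ one has $a_{i_0} \ge c_R$, then Herzog–Kunz generators $x_1, \ldots, x_n$ of $R$ can be chosen with $x_i = t^{a_i}$ for all $i \ge i_0$. (b) If moreover $k$ is algebraically closed of characteristic $0$, then the uniformizing parameter $t$ of $\overline R = k[[t]]$ can be chosen such that, in addition, $x_1 = t^{a_1}$ (and the valuation $v$, the integers $a_i$ and $c_R$ are unchanged by this choice).
   Context: Let $k$ be a field and let $(R,\mathfrak m)$ be a complete local noetherian domain of dimension $1$ containing $k$ with $R/\mathfrak m = k$, with normalization $\overline R$ having residue field $k$, so $\overline R = k[[t]]$ for a uniformizing parameter $t$ and $R \subseteq k[[t]]$ is finite birational with $Q(R) = k((t))$. Let $v$ be the $t$-adic valuation. For $A \subseteq k((t))$ let $v(A) = \{v(f): f\in A\setminus\{0\}\}$. The conductor is $\mathfrak C_R = \{x \in \overline R : x\overline R \subseteq R\}$; one has $\mathfrak C_R = t^{c_R}\overline R$, and $c_R$ is the conductor degree. The Herzog–Kunz sequence of $R$ is the set $v(\mathfrak m)\setminus v(\mathfrak m^2)$ listed increasingly as $a_1 < \cdots < a_n$ (then $n = \mathrm{edim}(R)$); Herzog–Kunz generators are elements $x_1,\ldots,x_n \in R$ with $v(x_i) = a_i$, and any such satisfy $R = k[[x_1,\ldots,x_n]]$ (the image of $k[[X_1,\dots,X_n]]\to k[[t]]$, $X_i\mapsto x_i$). *)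

(* Formal power series k[[t]] over a field k are modelled as
   coefficient sequences  nat -> k  (f = \sum_n f n t^n). *)
From mathcomp Require Import all_boot all_algebra.
Set Implicit Arguments. Unset Strict Implicit. Unset Printing Implicit Defensive.
Import GRing.Theory.
Local Open Scope ring_scope.

Section PS.
Variable k : fieldType.

Definition series := nat -> k.

Definition ps_zero : series := fun _ => 0.
Definition ps_const (c : k) : series := fun n => if n == 0%N then c else 0.
Definition ps_one : series := ps_const 1.
Definition ps_X : series := fun n => if n == 1%N then 1 else 0.
Definition ps_add (f g : series) : series := fun n => f n + g n.
Definition ps_mul (f g : series) : series :=
  fun n => \sum_(j < n.+1) f j * g (n - j)%N.
Definition ps_exp (f : series) (m : nat) : series := iter m (ps_mul f) ps_one.

Definition ps_ord (f : series) (n : nat) : Prop :=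
  f n != 0 /\ forall m, (m < n)%N -> f m = 0.

Definition val_set (A : series -> Prop) (j : nat) : Prop :=
  exists f, A f /\ ps_ord f j.

(* R is a k-subalgebra of k[[t]] with nonzero conductor, i.e. a complete local
   one-dimensional domain containing k, residue field k, with k[[t]] as
   finite birational normalization. *)
Record good_subring (R : series -> Prop) : Prop := {
  gs_const : forall c, R (ps_const c);
  gs_add : forall f g, R f -> R g -> R (ps_add f g);
  gs_mul : forall f g, R f -> R g -> R (ps_mul f g);
  gs_cond : exists c, forall f : series, (forall m, (m < c)%N -> f m = 0) -> R f
}.

(* maximal ideal of the local ring R = its non-units *)
Definition maxideal (R : series -> Prop) (f : series) : Prop :=
  R f /\ ~ (exists g, R g /\ ps_mul f g =1 ps_one).

Definition ideal_sq (I : series -> Prop) (f : series) : Prop :=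
  exists (N : nat) (a b : 'I_N -> series),
    (forall j, I (a j) /\ I (b j)) /\
    f =1 (fun n => \sum_(j < N) ps_mul (a j) (b j) n).

Definition conductor (R : series -> Prop) (x : series) : Prop :=
  forall y, R (ps_mul x y).

Definition conductor_degree (R : series -> Prop) (c : nat) : Prop :=
  (exists x, conductor R x /\ ps_ord x c) /\
  (forall x j, conductor R x -> ps_ord x j -> (c <= j)%N).

Definition HK_sequence (R : series -> Prop) (a : seq nat) : Prop :=
  sorted ltn a /\
  forall j, (j \in a) <->
    (val_set (maxideal R) j /\ ~ val_set (ideal_sq (maxideal R)) j).

End PS.

(* Everything of valuation at least c_R lies in R, because it is a multiple of
   an element of the conductor of valuation c_R; in particular every power
   t^m with m >= c_R is in R.  So for (a) any Herzog-Kunz generators may be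
   replaced from index i0 on by the monomials t^{a_i}.  For (b), pick an
   element x of R with v(x) = a_1: over an algebraically closed field of
   characteristic 0 it has an a_1-th root tau in k[[t]], found coefficient by
   coefficient, and v(tau) = 1; taking tau as new uniformizing parameter makes
   x = tau^{a_1}, while tau^{a_i} keeps valuation a_i >= c_R for i >= i0. *)
From mathcomp Require Import all_boot all_algebra.
From mathcomp Require Import zify ring.
From Stdlib Require Import IndefiniteDescription FunctionalExtensionality.
Set Implicit Arguments. Unset Strict Implicit. Unset Printing Implicit Defensive.
Import GRing.Theory.
Local Open Scope ring_scope.

Section PowerSeries.
Variable k : fieldType.
Implicit Types (f g h l u v w x y tau : series k) (p q : {poly k}).

Definition ps_agree f g n := forall j, (j < n)%N -> f j = g j.

Definition ps_trunc f n : {poly k} := \poly_(j < n.+1) f j.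

Lemma ps_trunc_coef f n j : (j <= n)%N -> (ps_trunc f n)`_j = f j.
Proof. by move=> le_jn; rewrite coef_poly ltnS le_jn. Qed.

Lemma ps_mulE f g p q n :
    (forall j, (j <= n)%N -> p`_j = f j) -> (forall j, (j <= n)%N -> q`_j = g j) ->
  ps_mul f g n = (p * q)`_n.
Proof.
move=> pf qg; rewrite coefM; apply: eq_bigr => j _.
by rewrite pf ?qg //; have := ltn_ord j; lia.
Qed.

Lemma ps_expE f p m n :
  (forall j, (j <= n)%N -> p`_j = f j) -> ps_exp f m n = (p ^+ m)`_n.
Proof.
elim: m n => [|m IHm] n pf; first by rewrite expr0 coef1 /= /ps_one /ps_const; case: (n == 0%N).
rewrite exprS; apply: ps_mulE => // j le_jn; symmetry.
by apply: IHm => i le_ij; apply: pf; apply: leq_trans le_jn.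
Qed.

Lemma ps_agree_mul f g h l n :
  ps_agree f g n -> ps_agree h l n -> ps_agree (ps_mul f h) (ps_mul g l) n.
Proof.
move=> fg hl j lt_jn; apply: eq_bigr => i _.
by rewrite fg ?hl //; have := ltn_ord i; lia.
Qed.

Lemma ps_agree_exp f g m n : ps_agree f g n -> ps_agree (ps_exp f m) (ps_exp g m) n.
Proof. by move=> fg; elim: m => [|m IHm] //=; apply: ps_agree_mul. Qed.

Lemma ps_mul_coef0 f g : ps_mul f g 0 = f 0%N * g 0%N.
Proof. by rewrite /ps_mul big_ord1. Qed.

Lemma ps_exp_coef0 f m : ps_exp f m 0 = f 0%N ^+ m.
Proof.
elim: m => [|m IHm]; first by rewrite /= /ps_one /ps_const eqxx.
by rewrite exprS -IHm; apply: ps_mul_coef0.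
Qed.

Lemma ps_mul_coefB f g h l n : (0 < n)%N -> ps_agree f g n -> ps_agree h l n ->
  ps_mul f h n - ps_mul g l n = f 0%N * (h n - l n) + (f n - g n) * h 0%N.
Proof.
case: n => [//|n] _ fg hl.
rewrite /ps_mul -sumrB big_ord_recl big_ord_recr /= big1 ?add0r; last first.
  by move=> i _; rewrite fg ?hl ?subrr //; have := ltn_ord i; rewrite /bump /=; lia.
by rewrite subn0 subnn -(fg 0%N) // -(hl 0%N) //; ring.
Qed.

Lemma ps_exp_coefB v v' m n : (0 < n)%N -> ps_agree v v' n ->
  ps_exp v m n - ps_exp v' m n = m%:R * v 0%N ^+ m.-1 * (v n - v' n).
Proof.
move=> n_gt0 vv'; elim: m => [|m IHm]; first by rewrite /= subrr !mul0r.
change (ps_mul v (ps_exp v m) n - ps_mul v' (ps_exp v' m) n =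
  m.+1%:R * v 0%N ^+ m * (v n - v' n)).
rewrite ps_mul_coefB //; last exact: ps_agree_exp.
rewrite IHm ps_exp_coef0; case: m {IHm} => [|m] /=; first by rewrite !expr0; ring.
by rewrite -[m.+2%:R]natr1 -[m.+1%:R]natr1 !exprS; ring.
Qed.

(* The n-th coefficient of the approximate solution is corrected by the error
   at n divided by lam; causality keeps the lower coefficients solved. *)
Lemma ps_causal_solve (F : series k -> series k) (lam r : k) g :
    lam != 0 ->
    (forall v v' n, ps_agree v v' n -> ps_agree (F v) (F v') n) ->
    (forall v v' n, (0 < n)%N -> v 0%N = r -> ps_agree v v' n ->
       F v n - F v' n = lam * (v n - v' n)) ->
    F (ps_const r) 0%N = g 0%N ->
  exists v, forall n, F v n = g n.
Proof.
move=> lam_neq0 F_causal F_top F0.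
pose W := fix W n := if n is m.+1 then
   (fun j => if j == m.+1 then W m j + (g j - F (W m) j) / lam else W m j)
   else ps_const r.
have WS m j : W m.+1 j = if j == m.+1 then W m j + (g j - F (W m) j) / lam
                         else W m j by [].
have W_stable n d j : (j <= n)%N -> W (n + d)%N j = W n j.
  move=> le_jn; elim: d => [|d IHd]; first by rewrite addn0.
  by rewrite addnS WS IHd; case: eqP => // ?; lia.
have W0 n : W n 0%N = r by rewrite -(add0n n) W_stable.
have W_agree n : ps_agree (W n.+1) (W n) n.+1.
  by move=> j lt_jn; rewrite WS; case: eqP => // ?; lia.
have FW n j : (j <= n)%N -> F (W n) j = g j.
  elim: n j => [|n IHn] j le_jn; first by have -> : j = 0%N by lia.
  case: (ltnP j n.+1) => [lt_jn|le_nj].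
    by rewrite (F_causal _ _ _ (W_agree n)) //; apply: IHn.
  have -> : j = n.+1 by lia.
  have := F_top _ _ n.+1 isT (W0 _) (W_agree n).
  rewrite WS eqxx addrAC subrr add0r mulrC divfK // => /(congr1 (+%R^~ (F (W n) n.+1))).
  by rewrite !subrK.
exists (fun j => W j j) => n.
have diag_agree : ps_agree (fun j => W j j) (W n) n.+1.
  by move=> j lt_jn; rewrite -(subnK (ltnSE lt_jn)) addnC W_stable.
by rewrite (F_causal _ _ _ diag_agree) //; apply: FW.
Qed.

Lemma ps_exp_coef_shift tau w m n :
    (forall j, tau j = if j is j'.+1 then w j' else 0) ->
  ps_exp tau m n = if (n < m)%N then 0 else ps_exp w m (n - m)%N.
Proof.
move=> tau_w; rewrite (@ps_expE _ ('X * ps_trunc w n)); last first.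
  move=> [|j] le_jn; rewrite coefXM tau_w //= ps_trunc_coef //; lia.
rewrite exprMn coefXnM; case: ifP => // _.
by symmetry; apply: ps_expE => j le_j; rewrite ps_trunc_coef //; lia.
Qed.

Lemma ps_mul_coef_shift x u y c n :
    (forall j, x j = if (j < c)%N then 0 else u (j - c)%N) ->
  ps_mul x y n = if (n < c)%N then 0 else ps_mul u y (n - c)%N.
Proof.
move=> x_u; rewrite (@ps_mulE _ _ ('X^c * ps_trunc u n) (ps_trunc y n)); first last.
- by move=> j le_jn; rewrite ps_trunc_coef.
- by move=> j le_jn; rewrite coefXnM x_u; case: ifP => // _; rewrite ps_trunc_coef //; lia.
rewrite -mulrA coefXnM; case: ifP => // _.
by symmetry; apply: ps_mulE => j le_j; rewrite ps_trunc_coef //; lia.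
Qed.

Lemma ps_ord_X : ps_ord (ps_X k) 1.
Proof. by split; [rewrite /ps_X eqxx oner_neq0 | case]. Qed.

Lemma ps_ord_exp tau m : ps_ord tau 1 -> ps_ord (ps_exp tau m) m.
Proof.
move=> [tau1_neq0 tau0].
have tau_shift j : tau j = if j is j'.+1 then tau j'.+1 else 0.
  by case: j => [|j] //; rewrite tau0.
split=> [|j lt_jm]; rewrite (ps_exp_coef_shift _ _ tau_shift) ?lt_jm //.
by rewrite ltnn subnn ps_exp_coef0 expf_neq0.
Qed.

Lemma ps_ord_dvd x g c : ps_ord x c -> (forall j, (j < c)%N -> g j = 0) ->
  exists y, forall n, ps_mul x y n = g n.
Proof.
move=> [xc_neq0 x_lt] g_lt.
pose u j := x (j + c)%N.
have u0 : u 0%N = x c by rewrite /u add0n.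
have [y uy] : exists y, forall n, ps_mul u y n = g (n + c)%N.
  apply: (ps_causal_solve (F := ps_mul u) (lam := u 0%N) (r := g c / u 0%N)).
  - by rewrite u0.
  - by move=> v v' n; apply: ps_agree_mul.
  - by move=> v v' n n_gt0 _ vv'; rewrite ps_mul_coefB // subrr mul0r addr0.
  - by rewrite ps_mul_coef0 /ps_const eqxx u0 mulrC divfK.
exists y => n; rewrite (@ps_mul_coef_shift _ u _ c).
  by case: ltnP => [/g_lt -> // | le_cn]; rewrite uy subnK.
by move=> j; case: ltnP => [/x_lt // | le_cj]; rewrite /u subnK.
Qed.

Section ClosedChar0.
Hypotheses (k_closed : GRing.closed_field_axiom k) (k_char0 : [pchar k] =i pred0).

(* Hensel's lemma for X^m - u: the slope m r^(m-1) is a unit in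
   characteristic 0 once r is an m-th root of the constant term. *)
Lemma ps_root u m : u 0%N != 0 -> (0 < m)%N -> exists w, forall n, ps_exp w m n = u n.
Proof.
move=> u0_neq0 m_gt0.
have [r rm] : exists r, r ^+ m = u 0%N.
  have [r rP] := k_closed (fun i => if i == 0%N then u 0%N else 0) m_gt0.
  exists r; rewrite {}rP; case: m m_gt0 => // m _.
  by rewrite big_ord_recl /= expr0 mulr1 big1 ?addr0 // => i _; rewrite mul0r.
have r_neq0 : r != 0.
  by apply: contraNneq u0_neq0 => r0; rewrite -rm r0 expr0n eqn0Ngt m_gt0.
apply: (@ps_causal_solve (fun v => ps_exp v m) (m%:R * r ^+ m.-1) r u).
- rewrite mulf_neq0 ?expf_neq0 //.
  by rewrite ((pcharf0P k).1 k_char0 m) -lt0n.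
- by move=> v v' n; apply: ps_agree_exp.
- by move=> v v' n n_gt0 v0 vv'; rewrite ps_exp_coefB // v0.
- by rewrite ps_exp_coef0 /ps_const eqxx.
Qed.

Lemma ps_ord_root x m : ps_ord x m -> (0 < m)%N ->
  exists tau, ps_ord tau 1 /\ forall n, ps_exp tau m n = x n.
Proof.
move=> [xm_neq0 x_lt] m_gt0.
have [w wm] := @ps_root (fun j => x (j + m)%N) m xm_neq0 m_gt0.
pose tau j := if j is j'.+1 then w j' else 0.
have tau_w : forall j, tau j = if j is j'.+1 then w j' else 0 by [].
exists tau; split.
  split=> [|[] //]; apply: contraNneq xm_neq0 => /= w0.
  by have := wm 0%N; rewrite ps_exp_coef0 add0n w0 expr0n gtn_eqF // => <-.
move=> n; rewrite (ps_exp_coef_shift _ _ tau_w).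
by case: ltnP => [/x_lt // | le_mn]; rewrite wm subnK.
Qed.

End ClosedChar0.
End PowerSeries.

Section HerzogKunz.
Variables (k : fieldType) (R : series k -> Prop) (a : seq nat).
Implicit Types (f tau : series k) (y : nat -> series k).

Lemma mem_ord_ge_conductor c f m :
  conductor_degree R c -> (c <= m)%N -> ps_ord f m -> R f.
Proof.
move=> [[x [x_cond xc]] _] le_cm [_ f_lt].
have [y xy] := ps_ord_dvd xc (fun j lt_jc => f_lt j (leq_trans lt_jc le_cm)).
by have -> : f = ps_mul x y by apply: functional_extensionality => n; rewrite xy.
Qed.

Lemma HK_sequence_generator i : HK_sequence R a -> (i < size a)%N ->
  exists f, R f /\ ps_ord f (nth 0%N a i).
Proof.
move=> [_ HK] lt_ia.
by have [[f [[Rf _] fi]] _] := (HK _).1 (mem_nth 0%N lt_ia); exists f.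
Qed.

Lemma HK_sequence_nth_le i j : HK_sequence R a -> (i <= j)%N -> (j < size a)%N ->
  (nth 0%N a i <= nth 0%N a j)%N.
Proof.
move=> [a_sorted _] le_ij lt_ja; case: (ltngtP i j) le_ij => // [lt_ij|->] _ //.
by apply/ltnW/(sorted_ltn_nth ltn_trans 0%N a_sorted); rewrite ?inE //; lia.
Qed.

Lemma HK_sequence_exp_mem c i0 i tau :
    conductor_degree R c -> HK_sequence R a -> (c <= nth 0%N a i0)%N ->
    ps_ord tau 1 -> (i0 <= i)%N -> (i < size a)%N ->
  R (ps_exp tau (nth 0%N a i)).
Proof.
move=> cR HK le_c_ai0 tau1 i0i lt_ia.
apply: mem_ord_ge_conductor cR _ (ps_ord_exp _ tau1).
exact: leq_trans le_c_ai0 (HK_sequence_nth_le HK i0i lt_ia).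
Qed.

Lemma HK_generators_extend (S : pred nat) y : HK_sequence R a ->
    (forall i, S i -> (i < size a)%N -> R (y i) /\ ps_ord (y i) (nth 0%N a i)) ->
  exists x : nat -> series k,
    (forall i, (i < size a)%N -> R (x i) /\ ps_ord (x i) (nth 0%N a i)) /\
    (forall i, S i -> x i =1 y i).
Proof.
move=> HK y_gen.
have [x xP] : exists x : nat -> series k, forall i, (i < size a)%N ->
    R (x i) /\ ps_ord (x i) (nth 0%N a i).
  apply: (functional_choice (fun i f => (i < size a)%N -> R f /\ ps_ord f (nth 0%N a i))) => i.
  case: (ltnP i (size a)) => [lt_ia | le_ai].
    by have [f fP] := HK_sequence_generator HK lt_ia; exists f.
  by exists (y i) => ?; lia.
exists (fun i => if S i then y i else x i).
split=> i; last by move=> ->.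
by case: ifP => [Si | _]; [apply: y_gen | apply: xP].
Qed.

Lemma uniformizer_pow_mem m :
    good_subring R -> GRing.closed_field_axiom k -> [pchar k] =i pred0 ->
    (exists f, R f /\ ps_ord f m) ->
  exists tau, ps_ord tau 1 /\ R (ps_exp tau m).
Proof.
move=> gsR k_closed k_char0 [f [Rf fm]].
have [->|m_gt0] := posnP m; first by exists (ps_X k); split; [exact: ps_ord_X | exact: gs_const].
have [tau [tau1 tau_f]] := ps_ord_root k_closed k_char0 fm m_gt0.
by exists tau; split => //; rewrite (functional_extensionality _ _ tau_f).
Qed.

End HerzogKunz.

Theorem mainTheorem3 (k : fieldType) (R : series k -> Prop) (a : seq nat)
    (c : nat) (i0 : nat) :
  good_subring R -> conductor_degree R c -> HK_sequence R a ->
  (i0 < size a)%N -> (c <= nth 0%N a i0)%N ->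
  (* (a) *)
  (exists x : nat -> series k,
      (forall i, (i < size a)%N -> R (x i) /\ ps_ord (x i) (nth 0%N a i)) /\
      (forall i, (i0 <= i < size a)%N -> x i =1 ps_exp (ps_X k) (nth 0%N a i)))
  /\
  (* (b) *)
  (GRing.closed_field_axiom k -> [pchar k] =i pred0 ->
   exists (tau : series k) (x : nat -> series k),
      ps_ord tau 1 /\
      (forall i, (i < size a)%N -> R (x i) /\ ps_ord (x i) (nth 0%N a i)) /\
      (forall i, (i0 <= i < size a)%N -> x i =1 ps_exp tau (nth 0%N a i)) /\
      x 0%N =1 ps_exp tau (nth 0%N a 0)).
Proof.
move=> gsR cR HK lt_i0a le_c_ai0.
have pow_mem tau i : ps_ord tau 1 -> (i0 <= i)%N -> (i < size a)%N ->
    R (ps_exp tau (nth 0%N a i)) /\ ps_ord (ps_exp tau (nth 0%N a i)) (nth 0%N a i).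
  by move=> tau1 i0i lt_ia; split; [apply: HK_sequence_exp_mem cR HK le_c_ai0 _ _ _ | apply: ps_ord_exp].
split.
  have [x [x_gen xX]] := @HK_generators_extend _ R a (leq i0)
    (fun i => ps_exp (ps_X k) (nth 0%N a i)) HK
    (fun i => pow_mem _ i (ps_ord_X k)).
  by exists x; split=> // i /andP[/xX].
move=> k_closed k_char0.
have lt0a : (0 < size a)%N by lia.
have [tau [tau1 R_tau_a0]] := uniformizer_pow_mem gsR k_closed k_char0
  (HK_sequence_generator HK lt0a).
have tau_gen i : (i == 0%N) || (i0 <= i)%N -> (i < size a)%N ->
    R (ps_exp tau (nth 0%N a i)) /\ ps_ord (ps_exp tau (nth 0%N a i)) (nth 0%N a i).
  move=> /orP[/eqP-> _ | i0i lt_ia]; last exact: pow_mem.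
  by split=> //; apply: ps_ord_exp.
have [x [x_gen x_tau]] := HK_generators_extend HK tau_gen.
exists tau, x; do 2!split=> //.
by split=> [i /andP[i0i _]|]; apply: x_tau; rewrite ?i0i ?orbT.
Qed.
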